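(* Let $W\in\mathbb{R}^{m\times n}$ have columns $W_1,\dots,W_n\in\mathbb{R}^m$, all nonzero, and let $F:=WW^\top$. For each $i$ define the fractional dimensionality $$D_i:=\frac{\|W_i\|^4}{\sum_{j=1}^n (W_i^\top W_j)^2},$$ and the spectral measure $\mu_i:=\sum_{e:\lambda_e>0} p_{i,e}\,\delta_{\lambda_e}$, where $\lambda_e$ runs over the distinct positive eigenvalues of $F$, $P_e$ is the orthogonal projector onto the $\lambda_e$-eigenspace of $F$, and $p_{i,e}:=\|P_eW_i\|^2/\|W_i\|^2$. Assume the capacity bound is saturated: $\sum_{i=1}^n D_i=\operatorname{rank}(W)=m$. Then for every feature $i$ the spectral measure $\mu_i$ is a single Dirac mass $\delta_{\lambda_k}$ at some eigenvalue $\lambda_k>0$ of $F$; equivalently, $FW_i=\lambda_kW_i$.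
   Context: $\delta_\lambda$ denotes the Dirac (point) probability measure at $\lambda$. For nonzero columns, the weights $p_{i,e}$ are nonnegative and sum to $1$, so $\mu_i$ is a finitely supported probability measure on $(0,\infty)$. *)

From HB Require Import structures.
From mathcomp Require Import all_boot all_order all_algebra.
Set Implicit Arguments. Unset Strict Implicit. Unset Printing Implicit Defensive.
Import Order.TTheory GRing.Theory Num.Theory.
Local Open Scope ring_scope.

Definition vdot (R : realFieldType) (m : nat) (u v : 'cV[R]_m) : R :=
  (u^T *m v) 0 0.
Definition nsq (R : realFieldType) (m : nat) (u : 'cV[R]_m) : R := vdot u u.

Definition frac_dim (R : realFieldType) (m n : nat) (W : 'M[R]_(m, n)) (i : 'I_n) : R :=
  nsq (col i W) ^+ 2 / \sum_(j < n) (vdot (col i W) (col j W)) ^+ 2.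

(* P is the orthogonal projector onto the subspace (row space) of U:
   P symmetric, idempotent, with the same range as U. *)
Definition orth_proj (R : realFieldType) (m : nat) (P U : 'M[R]_m) : Prop :=
  P^T = P /\ P *m P = P /\ (P == U)%MS.

Definition spec_weight (R : realFieldType) (m n : nat) (W : 'M[R]_(m, n))
  (P : 'M[R]_m) (i : 'I_n) : R :=
  nsq (P *m col i W) / nsq (col i W).

Definition spec_measure_dirac (R : realFieldType) (m n : nat) (W : 'M[R]_(m, n))
  (i : 'I_n) (lk : R) : Prop :=
  forall (l : R) (P : 'M[R]_m), 0 < l -> eigenvalue (W *m W^T) l ->
    orth_proj P (eigenspace (W *m W^T) l) ->
    spec_weight W P i = (l == lk)%:R.

(* Since W has full row rank, F = W W^T is invertible and G := F^-1 is
   positive definite.  In the inner product <u, v>_G the column x = W_i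
   satisfies <Fx, x>_G = |x|^2 and <Fx, Fx>_G = |W^T x|^2, so Cauchy-Schwarz
   for Fx and x reads D_i <= <x, x>_G, with equality iff Fx is a multiple
   of x.  The right-hand sides sum to tr (W^T G W) = tr (G F) = m, so
   saturation forces equality for every i: each W_i is an eigenvector of F,
   hence lies in a single eigenspace. *)
From HB Require Import structures.
From mathcomp Require Import all_boot all_order all_algebra.
From mathcomp Require Import ring.
Set Implicit Arguments. Unset Strict Implicit. Unset Printing Implicit Defensive.
Import Order.TTheory GRing.Theory Num.Theory.
Local Open Scope ring_scope.

Section Forms.
Variables (R : realFieldType) (m : nat).
Implicit Types (G : 'M[R]_m) (u v w : 'cV[R]_m).

Lemma nsqE v : nsq v = \sum_j v j 0 ^+ 2.
Proof. by rewrite /nsq /vdot mxE; apply: eq_bigr => j _; rewrite mxE expr2. Qed.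

Lemma nsq0 : nsq (0 : 'cV[R]_m) = 0.
Proof. by rewrite nsqE big1 // => j _; rewrite mxE expr0n. Qed.

Lemma nsq_gt0 v : v != 0 -> 0 < nsq v.
Proof.
move=> v_neq0; rewrite nsqE lt_def sumr_ge0 ?andbT => [|j _]; last exact: sqr_ge0.
apply: contra v_neq0 => /eqP /psumr_eq0P v0; apply/eqP/matrixP => j k.
by rewrite ord1 mxE; apply/eqP; rewrite -sqrf_eq0 v0 // => l _; apply: sqr_ge0.
Qed.

Definition form G u v : R := (u^T *m G *m v) 0 0.

Definition posdef G := forall v, v != 0 -> 0 < form G v v.

Lemma formC G u v : G^T = G -> form G u v = form G v u.
Proof.
move=> G_sym; rewrite /form.
have -> : (u^T *m G *m v) 0 0 = (u^T *m G *m v)^T 0 0 by rewrite [RHS]mxE.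
by rewrite !trmx_mul trmxK G_sym mulmxA.
Qed.

Lemma formBl G u v w t : form G (u - t *: v) w = form G u w - t * form G v w.
Proof. by rewrite /form linearB /= linearZ /= !mulmxBl -!scalemxAl !mxE. Qed.

Lemma formBr G u v w t :
  G^T = G -> form G w (u - t *: v) = form G w u - t * form G w v.
Proof. by move=> G_sym; rewrite formC // formBl !(formC _ w). Qed.

Lemma posdef_form_ge0 G v : posdef G -> 0 <= form G v v.
Proof.
move=> G_pd; have [->|/G_pd/ltW //] := eqVneq v 0.
by rewrite /form !mulmx0 mxE.
Qed.

Lemma posdef_unitmx G : posdef G -> G \in unitmx.
Proof.
move=> G_pd; rewrite -row_free_unit; apply: inj_row_free => v vG0.
apply/eqP; apply: contraT => v_neq0.
have := G_pd v^T; rewrite trmx_eq0 => /(_ v_neq0).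
by rewrite /form trmxK vG0 mul0mx mxE ltxx.
Qed.

Lemma posdef_invmx G : G^T = G -> posdef G -> posdef (invmx G).
Proof.
move=> G_sym G_pd v v_neq0; have G_unit := posdef_unitmx G_pd.
have -> : form (invmx G) v v = form G (invmx G *m v) (invmx G *m v).
  by rewrite /form trmx_mul trmx_inv G_sym mulmxKV // mulmxA.
apply: G_pd; apply: contra v_neq0 => /eqP Gv0.
by rewrite -(mulKVmx G_unit v) Gv0 mulmx0.
Qed.

Section CauchySchwarz.
Variable G : 'M[R]_m.
Hypotheses (G_sym : G^T = G) (G_pd : posdef G).

Lemma form_sub_proj u v : 0 < form G v v ->
  form G (u - (form G u v / form G v v) *: v) (u - (form G u v / form G v v) *: v)
  = form G u u - form G u v ^+ 2 / form G v v.
Proof.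
move=> vv_gt0; rewrite formBl !formBr // (formC u v) //.
by field; rewrite gt_eqF.
Qed.

Lemma form_CauchySchwarz u v :
  form G u v ^+ 2 <= form G u u * form G v v.
Proof.
have [->|v_neq0] := eqVneq v 0.
  by rewrite /form !mulmx0 !mxE expr0n mulr0.
have vv_gt0 := G_pd v_neq0.
by rewrite -ler_pdivrMr // -subr_ge0 -form_sub_proj // posdef_form_ge0.
Qed.

Lemma form_CauchySchwarz_eq u v : v != 0 ->
  form G u v ^+ 2 = form G u u * form G v v ->
  u = (form G u v / form G v v) *: v.
Proof.
move=> v_neq0 uv_eq; have vv_gt0 := G_pd v_neq0.
apply/eqP; rewrite -subr_eq0; apply: contraT => /G_pd.
by rewrite form_sub_proj // uv_eq mulfK ?gt_eqF // subrr ltxx.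
Qed.

End CauchySchwarz.
End Forms.

Section Gram.
Variables (R : realFieldType) (m n : nat) (W : 'M[R]_(m, n)).

Lemma form_gram v : form (W *m W^T) v v = nsq (W^T *m v).
Proof. by rewrite /form /nsq /vdot trmx_mul trmxK !mulmxA. Qed.

Lemma gram_sym : (W *m W^T)^T = W *m W^T.
Proof. by rewrite trmx_mul trmxK. Qed.

Lemma posdef_gram : row_free W -> posdef (W *m W^T).
Proof.
move=> W_free v v_neq0; rewrite form_gram nsq_gt0 //.
by rewrite -trmx_eq0 trmx_mul trmxK mulmx_free_eq0 // trmx_eq0.
Qed.

Lemma sum_sqr_vdot_col i :
  \sum_(j < n) vdot (col i W) (col j W) ^+ 2 = nsq (W^T *m col i W).
Proof.
rewrite nsqE; apply: eq_bigr => j _; rewrite /vdot !mxE.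
by congr (_ ^+ 2); apply: eq_bigr => k _; rewrite !mxE mulrC.
Qed.

Lemma sum_form_col (G : 'M[R]_m) :
  \sum_(i < n) form G (col i W) (col i W) = \tr (W^T *m G *m W).
Proof.
apply: eq_bigr => i _; rewrite /form tr_col -row_mul !mxE.
by apply: eq_bigr => k _; rewrite !mxE.
Qed.

End Gram.

Lemma eigenprojector_mul_eigenvector (R : realFieldType) (m : nat)
    (F P : 'M[R]_m) (x : 'cV[R]_m) (l t : R) :
  F^T = F -> orth_proj P (eigenspace F l) -> F *m x = t *: x ->
  P *m x = (l == t)%:R *: x.
Proof.
move=> F_sym [P_sym [P_idem /andP [PE EP]]] Fx.
have [l_eq_t|l_neq_t] := eqVneq l t; rewrite ?scale1r ?scale0r.
  subst l.
  have /submxP [D xD] : (x^T <= P)%MS.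
    by apply: submx_trans EP; apply/eigenspaceP; rewrite -F_sym -trmx_mul Fx linearZ.
  by rewrite -P_sym -[x]trmxK -trmx_mul xD -mulmxA P_idem.
have PF : P *m F = l *: P by apply/eigenspaceP: PE.
have : (l - t) *: (P *m x) = 0.
  by rewrite scalerBl scalemxAl -PF -mulmxA Fx -scalemxAr subrr.
by move/eqP; rewrite scaler_eq0 subr_eq0 (negbTE l_neq_t) => /eqP.
Qed.

Section Saturation.
Variables (R : realFieldType) (m n : nat) (W : 'M[R]_(m, n)).
Hypothesis W_free : row_free W.

Let F := W *m W^T.
Let G := invmx F.

Lemma gram_unitmx : F \in unitmx.
Proof. exact/posdef_unitmx/posdef_gram. Qed.

Lemma form_invmx_gram_mull u v : form G (F *m u) v = vdot u v.
Proof.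
by rewrite /form /vdot trmx_mul gram_sym -(mulmxA _ F) mulmxV ?gram_unitmx ?mulmx1.
Qed.

Lemma frac_dimE i :
  frac_dim W i = nsq (col i W) ^+ 2 / form F (col i W) (col i W).
Proof. by rewrite /frac_dim sum_sqr_vdot_col form_gram. Qed.

Lemma posdef_invmx_gram : posdef G.
Proof. exact/posdef_invmx/posdef_gram/W_free/gram_sym. Qed.

Lemma invmx_gram_sym : G^T = G.
Proof. by rewrite trmx_inv gram_sym. Qed.

Lemma form_invmx_gram_mul2 u : form G (F *m u) (F *m u) = form F u u.
Proof. by rewrite form_invmx_gram_mull /vdot /form mulmxA. Qed.

Section Column.
Variable i : 'I_n.
Hypothesis Wi_neq0 : col i W != 0.
Let x := col i W.

Lemma form_gram_col_gt0 : 0 < form F x x.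
Proof. exact: posdef_gram. Qed.

Lemma form_invmx_gram_col_gt0 : 0 < form G x x.
Proof. exact: posdef_invmx_gram. Qed.

Lemma frac_dim_le_form : frac_dim W i <= form G x x.
Proof.
rewrite frac_dimE ler_pdivrMr ?form_gram_col_gt0 //.
rewrite -form_invmx_gram_mul2 -[nsq x]form_invmx_gram_mull mulrC.
exact/form_CauchySchwarz/posdef_invmx_gram/invmx_gram_sym.
Qed.

Lemma frac_dim_eq_form_eigenvector : frac_dim W i = form G x x ->
  F *m x = (nsq x / form G x x) *: x.
Proof.
rewrite frac_dimE => fd_eq.
have CS_eq : form G (F *m x) x ^+ 2 = form G (F *m x) (F *m x) * form G x x.
  rewrite form_invmx_gram_mul2 form_invmx_gram_mull -fd_eq mulrC.
  by rewrite divfK ?gt_eqF ?form_gram_col_gt0.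
rewrite -[nsq x]form_invmx_gram_mull.
exact: form_CauchySchwarz_eq invmx_gram_sym posdef_invmx_gram _ _ Wi_neq0 CS_eq.
Qed.

End Column.

Lemma sum_form_invmx_gram_col : \sum_i form G (col i W) (col i W) = m%:R.
Proof. by rewrite sum_form_col mxtrace_mulC mulmxA mulmxV ?gram_unitmx // mxtrace1. Qed.

Lemma frac_dim_saturated : (forall i, col i W != 0) ->
  \sum_i frac_dim W i = m%:R -> forall i, frac_dim W i = form G (col i W) (col i W).
Proof.
move=> W_neq0 sat_eq i; apply/eqP.
have le_sum := leif_sum (fun j (_ : true) => leif_eq (frac_dim_le_form (W_neq0 j))).
move: (eq_leif le_sum); rewrite sat_eq sum_form_invmx_gram_col eqxx.
by move=> /esym/forall_inP; apply.
Qed.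

End Saturation.

Lemma eigenvalue_sym_eigenvector (R : realFieldType) (m : nat) (F : 'M[R]_m) (x : 'cV[R]_m) t :
  F^T = F -> x != 0 -> F *m x = t *: x -> eigenvalue F t.
Proof.
move=> F_sym x_neq0 Fx; apply/eigenvalueP; exists x^T; last by rewrite trmx_eq0.
by rewrite -{1}F_sym -trmx_mul Fx linearZ.
Qed.

Lemma spec_measure_dirac_eigen (R : realFieldType) (m n : nat) (W : 'M[R]_(m, n)) i t :
  col i W != 0 -> W *m W^T *m col i W = t *: col i W -> spec_measure_dirac W i t.
Proof.
move=> Wi_neq0 Wi_eigen l P _ _ P_proj.
rewrite /spec_weight (eigenprojector_mul_eigenvector (gram_sym W) P_proj Wi_eigen).
have [_|_] := eqVneq l t; rewrite ?scale1r ?scale0r ?nsq0 ?mul0r //.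
by rewrite divff // gt_eqF // nsq_gt0.
Qed.

Theorem theorem1 (R : realFieldType) (m n : nat) (W : 'M[R]_(m, n))
  (Hnz : forall i : 'I_n, col i W != 0)
  (Hrank : \rank W = m)
  (Hsat : \sum_(i < n) frac_dim W i = (\rank W)%:R) :
  forall i : 'I_n, exists lk : R,
    [/\ 0 < lk, eigenvalue (W *m W^T) lk,
        spec_measure_dirac W i lk
      & (W *m W^T) *m col i W = lk *: col i W].
Proof.
have W_free : row_free W by rewrite /row_free Hrank.
have sat_eq : \sum_i frac_dim W i = m%:R by rewrite Hsat Hrank.
have fd_eq := frac_dim_saturated W_free Hnz sat_eq.
move=> i; have Wi_eigen := frac_dim_eq_form_eigenvector W_free (Hnz i) (fd_eq i).
eexists; split; last exact: Wi_eigen.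
- by rewrite divr_gt0 ?nsq_gt0 ?form_invmx_gram_col_gt0.
- exact: eigenvalue_sym_eigenvector (gram_sym W) (Hnz i) Wi_eigen.
- exact: spec_measure_dirac_eigen.
Qed.
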